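(* Let $G=(V,E)$ be a finite graph with at least one vertex and $k>0$ an integer. Let $\mathcal F^{(2)}_k$ be the set of all stars $\sigma=\{(A_1,B_1),(A_2,B_2)\}\subseteq\vec S_k$ (with possibly $(A_1,B_1)=(A_2,B_2)$) such that $|B_1\cap B_2|<k$. The following are equivalent: (i) $G$ has a blockage of order $k-1$; (ii) $G$ has an $\mathcal F^{(2)}_k$-tangle of $S_k$; (iii) $G$ has no $S_k$-tree over $\mathcal F^{(2)}_k$; (iv) $G$ has path-width at least $k-1$.
   Context: An oriented vertex separation of $G$ is an ordered pair $(A,B)$ with $A\cup B=V$ and no edge between $A\setminus B$ and $B\setminus A$; $(A,B)\le(C,D)$ iff $A\subseteq C$ and $B\supseteq D$; $(A,B)^*=(B,A)$. $\vec S_k$ is the set of those with $|A\cap B|<k$, and $S_k$ the set of pairs $\{(A,B),(B,A)\}$ with $(A,B)\in\vec S_k$ (identified with unordered pairs $\{A,B\}$). A star is a nonempty set $\sigma$ with $\vec r\le\vec s^{\,*}$ for all distinct $\vec r,\vec s\in\sigma$. An orientation of $S_k$ contains exactly one of $(A,B),(B,A)$ for each pair; it is consistent if there are no distinct $r,s\in S_k$ with orientations $\vec r<\vec s$ such that $\vec r^{\,*},\vec s\in O$; an $\mathcal F$-tangle is a consistent orientation of $S_k$ no subset of which lies in $\mathcal F$. An $S_k$-tree over $\mathcal F$ is a pair $(T,\alpha)$, $T$ a finite tree with at least one edge, $\alpha$ mapping each ordered pair $(x,y)$ with $xy\in E(T)$ to $\vec S_k$ with $\alpha(y,x)=\alpha(x,y)^*$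 and $\{\alpha(x,t):xt\in E(T)\}\in\mathcal F$ for every node $t$. For $X\subseteq V$, $\partial(X)$ is the set of vertices of $X$ with a neighbour outside $X$. A blockage of order $k-1$ is a collection $\mathcal B$ of subsets of $V$ such that (B1) $|\partial(X)|<k$ for all $X\in\mathcal B$; (B2) $X'\in\mathcal B$ whenever $X'\subseteq X\in\mathcal B$ and $|\partial(X')|<k$; (B3) for every $\{X_1,X_2\}\in S_k$, exactly one of $X_1,X_2$ lies in $\mathcal B$. Path-width is the minimum width of a tree-decomposition whose tree is a path. *)

From mathcomp Require Import all_boot.
Set Implicit Arguments. Unset Strict Implicit. Unset Printing Implicit Defensive.

Definition osep (V : finType) := ({set V} * {set V})%type.

Definition sep_swap (V : finType) (s : osep V) : osep V := (s.2, s.1).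

Definition is_osep (V : finType) (e : rel V) (s : osep V) : bool :=
  (s.1 :|: s.2 == setT) &&
  [forall x, forall y, ~~ [&& x \in s.1 :\: s.2, y \in s.2 :\: s.1 & e x y]].

Definition in_vSk (V : finType) (e : rel V) (k : nat) (s : osep V) : bool :=
  is_osep e s && (#|s.1 :&: s.2| < k).

Definition sep_le (V : finType) (r s : osep V) : bool :=
  (r.1 \subset s.1) && (s.2 \subset r.2).

Definition is_star (V : finType) (sigma : {set osep V}) : Prop :=
  sigma != set0 /\
  forall r s, r \in sigma -> s \in sigma -> r != s -> sep_le r (sep_swap s).

Definition F2 (V : finType) (e : rel V) (k : nat) (sigma : {set osep V}) : Prop :=
  (forall s, s \in sigma -> in_vSk e k s) /\ is_star sigma /\
  exists r s, sigma = [set r; s] /\ #|r.2 :&: s.2| < k.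

Definition is_orientation (V : finType) (e : rel V) (k : nat) (O : {set osep V}) : Prop :=
  (forall s, s \in O -> in_vSk e k s) /\
  (forall s, in_vSk e k s -> (s \in O) || (sep_swap s \in O)) /\
  (forall s, in_vSk e k s -> s != sep_swap s -> ~~ ((s \in O) && (sep_swap s \in O))).

Definition consistent (V : finType) (e : rel V) (k : nat) (O : {set osep V}) : Prop :=
  ~ exists r s, [/\ in_vSk e k r && in_vSk e k s,
                   (r != s) && (r != sep_swap s),
                   sep_le r s,
                   sep_swap r \in O & s \in O].

Definition is_tangle (V : finType) (e : rel V) (k : nat)
    (F : {set osep V} -> Prop) (O : {set osep V}) : Prop :=
  [/\ is_orientation e k O, consistent e k O &
      forall sigma : {set osep V}, sigma \subset O -> ~ F sigma].

Definition is_tree_with_edge (N : finType) (f : rel N) : Prop :=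
  [/\ symmetric f, irreflexive f,
      (forall x y, connect f x y),
      (forall p : seq N, uniq p -> 3 <= size p -> ~~ cycle f p) &
      exists x y, f x y].

Definition Sk_tree_over (V : finType) (e : rel V) (k : nat)
    (F : {set osep V} -> Prop) (N : finType) (f : rel N) (alpha : N -> N -> osep V) : Prop :=
  [/\ is_tree_with_edge f,
      (forall x y, f x y -> in_vSk e k (alpha x y)),
      (forall x y, f x y -> alpha y x = sep_swap (alpha x y)) &
      (forall t, F [set alpha x t | x in [set x | f x t]])].

Definition has_Sk_tree_over (V : finType) (e : rel V) (k : nat)
    (F : {set osep V} -> Prop) : Prop :=
  exists (N : finType) (f : rel N) (alpha : N -> N -> osep V), Sk_tree_over e k F f alpha.

Definition boundary (V : finType) (e : rel V) (X : {set V}) : {set V} :=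
  [set x in X | [exists y, e x y && (y \notin X)]].

Definition is_blockage (V : finType) (e : rel V) (k : nat) (B : {set {set V}}) : Prop :=
  [/\ (forall X, X \in B -> #|boundary e X| < k),
      (forall X X' : {set V}, X \in B -> X' \subset X -> #|boundary e X'| < k -> X' \in B) &
      (forall s, in_vSk e k s -> (s.1 \in B) (+) (s.2 \in B))].

Definition is_path_decomp (V : finType) (e : rel V) (P : seq {set V}) : Prop :=
  [/\ 0 < size P,
      (forall v, exists2 W, W \in P & v \in W),
      (forall x y, e x y -> exists2 W, W \in P & (x \in W) && (y \in W)) &
      (forall i j l, i <= j -> j <= l -> l < size P ->
         nth set0 P i :&: nth set0 P l \subset nth set0 P j)].

Definition pd_width (V : finType) (P : seq {set V}) : nat :=
  (\max_(W <- P) #|W|).-1.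

Definition pathwidth_at_least (V : finType) (e : rel V) (m : nat) : Prop :=
  forall P, is_path_decomp e P -> m <= pd_width P.

(* A "linked chain" is a sequence of separations in S_k, from (set0, V) to
   (V, set0), in which consecutive separations are nested and share a side.
   Such a chain is the same thing as a path-decomposition of width < k - 1 (its
   bags are the separators), and it is also an S_k-tree over F2 whose tree is a
   path.  A blockage excludes a chain, because the first side of a chain never
   leaves the blockage, and an F2-tangle excludes any S_k-tree over F2.
   Conversely, when there is no chain we orient S_k greedily: if x is
   oriented, so is every y for which a chain runs from below x to above y.
   Submodularity of |A :&: B| lets two such chains be uncrossed, so this
   "forcing" is transitive, and an orientation of maximal size closed under it
   is total.  It is an F2-tangle, and the first sides of its members form a
   blockage. *)

From mathcomp Require Import all_boot.
From mathcomp Require Import zify.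
Set Implicit Arguments. Unset Strict Implicit. Unset Printing Implicit Defensive.

Lemma connect_ind (T : finType) (r : rel T) (P : T -> T -> Prop) :
  (forall x, P x x) -> (forall x y z, r x y -> connect r y z -> P y z -> P x z) ->
  forall x y, connect r x y -> P x y.
Proof.
move=> P_refl P_step x y /connectP[p]; elim: p x => [|z p IH] x /=.
  by move=> _ ->.
case/andP=> rxz zp y_last; apply: P_step rxz _ (IH z zp y_last).
by apply/connectP; exists p.
Qed.

Lemma nat_transition (q : pred nat) n :
  ~~ q 0 -> q n -> exists2 j, j < n & ~~ q j && q j.+1.
Proof.
elim: n => [|n IH] q0 qn; first by rewrite qn in q0.
case qn' : (q n); last by exists n; rewrite ?qn' ?qn.
by have [j jn qj] := IH q0 qn'; exists j => //; exact: ltnW.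
Qed.

(** * Acyclic graphs and paths *)

Section AcyclicWalks.
Variables (N : finType) (f D : rel N).
Hypotheses (f_sym : symmetric f) (f_irr : irreflexive f).
Hypothesis f_acyclic : forall p : seq N, uniq p -> 3 <= size p -> ~~ cycle f p.
Hypothesis sub_Df : subrel D f.
Hypothesis D_continue : forall x y, D x y -> exists2 z, D y z & z != x.

Local Notation back := (fun a b => D b a).

Lemma nonbacktracking_walk_extend y x r :
  uniq [:: y, x & r] -> path back y (x :: r) ->
  exists z, uniq [:: z, y, x & r] && path back z [:: y, x & r].
Proof.
move=> walk_uniq walk.
have [z Dyz zNx] := D_continue (proj1 (andP walk)).
case zin: (z \in [:: y, x & r]); last first.
  by exists z; rewrite cons_uniq zin walk_uniq /= Dyz.
have zNy : z != y by apply: contraTneq (sub_Df Dyz) => ->; rewrite f_irr.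
move: zin; rewrite !inE (negbTE zNy) (negbTE zNx) /= => zr.
case/splitPr: zr walk_uniq walk => r1 r2 walk_uniq walk.
(* [z] is already on the walk, which therefore closes the cycle [c] *)
pose c := [:: y, x & rcons r1 z].
have c_uniq : uniq c.
  by move: walk_uniq; rewrite -cat_rcons -!cat_cons cat_uniq => /andP[].
have c_path : path f y (x :: rcons r1 z).
  have back_f : subrel back f by move=> a b /sub_Df; rewrite f_sym.
  move: (sub_path back_f walk).
  by rewrite -cat_rcons -cat_cons cat_path => /andP[].
suff : cycle f c by rewrite (negbTE (f_acyclic c_uniq _)) // /c /= size_rcons.
by rewrite /c /= rcons_path last_rcons (f_sym z) (sub_Df Dyz) andbT.
Qed.

Lemma acyclic_no_nonbacktracking_walk x y : ~~ D x y.
Proof.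
apply/negP => Dxy.
suff /(_ #|N|) [z [u [r [rN /andP[walk_uniq _]]]]] : forall n,
    exists z u r, size r = n /\ uniq [:: z, u & r] && path back z (u :: r).
  have := max_card (mem [:: z, u & r]).
  by rewrite (card_uniqP walk_uniq) /= rN => /ltnW; rewrite ltnn.
elim=> [|n [z [u [r [rN /andP[walk_uniq walk]]]]]].
  exists y, x, [::]; rewrite /= Dxy inE !andbT; split=> //.
  by apply: contraTneq (sub_Df Dxy) => ->; rewrite f_irr.
have [z' /andP[walk_uniq' walk']] := nonbacktracking_walk_extend walk_uniq walk.
by exists z', z, (u :: r); rewrite /= rN; split=> //; apply/andP.
Qed.

End AcyclicWalks.

Definition path_rel n : rel 'I_n := fun i j => (i.+1 == j :> nat) || (j.+1 == i :> nat).

Lemma path_rel_sym n : symmetric (@path_rel n).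
Proof. by move=> i j; rewrite /path_rel orbC. Qed.

Lemma path_rel_irr n : irreflexive (@path_rel n).
Proof. by move=> i; rewrite /path_rel orbb (gtn_eqF (ltnSn _)). Qed.

Lemma path_rel_connect n (i j : 'I_n) : connect (@path_rel n) i j.
Proof.
wlog le_ij : i j / i <= j.
  move=> H; case: (leqP i j) => [/H //| /ltnW/H].
  by rewrite (sym_connect_sym (@path_rel_sym n)).
case: j le_ij => j; elim: j => [|j IH] lt_jn le_ij.
  by rewrite (_ : i = Ordinal lt_jn) ?connect0 //; apply: val_inj; move: le_ij => /=; lia.
case: (eqVneq (i : nat) j.+1) => [eq_ij | ne_ij].
  by rewrite (_ : i = Ordinal lt_jn) ?connect0 //; apply: val_inj.
apply: connect_trans (IH (ltnW lt_jn) _) (connect1 _); first by move: le_ij ne_ij => /=; lia.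
by rewrite /path_rel /= eqxx.
Qed.

Lemma path_rel_acyclic n (p : seq 'I_n) :
  uniq p -> 3 <= size p -> ~~ cycle (@path_rel n) p.
Proof.
case: p => [//|i0 p0] p_uniq p_size; apply/negP => p_cycle.
have [M Mp Mmax] := @arg_maxnP _ i0 (mem (i0 :: p0)) (@nat_of_ord n) (mem_head _ _).
(* Rotate the cycle to start at its maximum [M]: both neighbours of
   [M] are then [M - 1] *)
have [q rot_q] : exists q, rot (index M (i0 :: p0)) (i0 :: p0) = M :: q.
  by eexists; exact: rot_index Mp.
have : uniq (M :: q) by rewrite -rot_q rot_uniq.
have : 3 <= size (M :: q) by rewrite -rot_q size_rot.
have : cycle (@path_rel n) (M :: q) by rewrite -rot_q rot_cycle.
have le_M j : j \in M :: q -> j <= M by rewrite -rot_q mem_rot => /Mmax.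
case: q le_M {rot_q} => [//|a [//|b q]] le_M.
rewrite /= rcons_path => /and3P[Ma _ /andP[_ lM]] _.
set l := last b q in lM.
have l_q : l \in b :: q by exact: mem_last.
have eq_aM : a = M.-1 :> nat.
  have /le_M : a \in [:: M, a, b & q] by rewrite !inE eqxx orbT.
  by case/orP: Ma => /eqP; lia.
have eq_lM : l = M.-1 :> nat.
  have /le_M : l \in [:: M, a, b & q] by rewrite in_cons in_cons l_q !orbT.
  by case/orP: lM => /eqP; lia.
by rewrite /= (val_inj (etrans eq_aM (esym eq_lM))) l_q !andbF.
Qed.

Lemma path_rel_tree n : is_tree_with_edge (@path_rel n.+2).
Proof.
split; [exact: path_rel_sym | exact: path_rel_irr | exact: path_rel_connect
       | exact: path_rel_acyclic | ].
by exists ord0, (inord 1); rewrite /path_rel inordK.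
Qed.

Local Notation "s ^*" := (sep_swap s).

Section Separations.
Variables (V : finType) (e : rel V) (k : nat).
Hypothesis e_sym : symmetric e.

Local Notation inSk := (in_vSk e k).
Implicit Types a b c m p s t z w : osep V.

(** * The lattice of separations *)

Definition sep_order (s : osep V) := #|s.1 :&: s.2|.

Lemma is_osepP (s : osep V) :
  reflect (s.1 :|: s.2 = setT /\
           forall x y, x \in s.1 :\: s.2 -> y \in s.2 :\: s.1 -> ~~ e x y)
          (is_osep e s).
Proof.
apply: (iffP andP) => [[/eqP-> /forallP sepP] | [-> sepP]]; split => //.
  move=> x y x_sep y_sep; move/forallP: (sepP x) => /(_ y).
  by rewrite x_sep y_sep.
apply/forallP => x; apply/forallP => y; apply/negP => /and3P[x_sep y_sep].
exact/negP/sepP.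
Qed.

Lemma in_vSkE s : inSk s = is_osep e s && (sep_order s < k).
Proof. by []. Qed.

Lemma sep_le_refl s : sep_le s s.
Proof. by rewrite /sep_le !subxx. Qed.

Lemma sep_le_trans a b c : sep_le a b -> sep_le b c -> sep_le a c.
Proof.
case/andP => ab1 ba2 /andP[bc1 cb2].
by rewrite /sep_le (subset_trans ab1 bc1) (subset_trans cb2 ba2).
Qed.

Lemma sep_swapK : involutive (@sep_swap V).
Proof. by case. Qed.

Lemma sep_le_swapE a b : sep_le a^* b^* = sep_le b a.
Proof. by rewrite /sep_le /= andbC. Qed.

Lemma sep_le_swap a b : sep_le a b -> sep_le b^* a^*.
Proof. by rewrite sep_le_swapE. Qed.

Lemma is_osep_swap s : is_osep e s -> is_osep e s^*.
Proof.
case/is_osepP => cover sep; apply/is_osepP; split; first by rewrite /= setUC.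
by move=> x y x_sep y_sep; rewrite e_sym sep.
Qed.

Lemma sep_order_swap s : sep_order s^* = sep_order s.
Proof. by rewrite /sep_order setIC. Qed.

Lemma in_vSk_swap s : inSk s -> inSk s^*.
Proof. by rewrite !in_vSkE sep_order_swap => /andP[/is_osep_swap -> ->]. Qed.

Lemma sep_cover (s : osep V) x : is_osep e s -> (x \in s.1) || (x \in s.2).
Proof. by case/is_osepP => cover _; rewrite -in_setU cover inE. Qed.

Lemma sep_edge_side s x y :
  is_osep e s -> e x y -> y \in s.2 :\: s.1 -> x \in s.2.
Proof.
move=> sep_s exy y_sep; apply/negPn/negP => xN2; have [_ sep'] := is_osepP _ sep_s.
have x1 : x \in s.1 by move: (sep_cover x sep_s); rewrite (negbTE xN2) orbF.
by move: exy; apply/negP/sep'; rewrite // inE x1 xN2.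
Qed.

Definition sep_meet (a b : osep V) : osep V := (a.1 :&: b.1, a.2 :|: b.2).
Definition sep_join (a b : osep V) : osep V := (a.1 :|: b.1, a.2 :&: b.2).

Lemma sep_joinE a b : sep_join a b = (sep_meet a^* b^*)^*.
Proof. by []. Qed.

Lemma is_osep_meet a b : is_osep e a -> is_osep e b -> is_osep e (sep_meet a b).
Proof.
move=> sep_a sep_b; apply/is_osepP; split.
  apply/setP => v; rewrite !inE.
  by move: (sep_cover v sep_a) (sep_cover v sep_b); do 4!case: (_ \in _).
have [_ sep_a'] := is_osepP _ sep_a; have [_ sep_b'] := is_osepP _ sep_b.
move=> x y; rewrite !inE negb_or => /andP[/andP[xa2 xb2] /andP[xa1 xb1]].
move=> /andP[]; rewrite negb_and; case ya1: (y \in a.1) => /=.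
  move=> yb1 _; apply: sep_b'; rewrite inE ?xb1 ?xb2 //.
  by move: (sep_cover y sep_b); rewrite (negbTE yb1).
move=> _ _; apply: sep_a'; rewrite inE ?xa1 ?xa2 ?ya1 //=.
by move: (sep_cover y sep_a); rewrite ya1.
Qed.

Lemma is_osep_join a b : is_osep e a -> is_osep e b -> is_osep e (sep_join a b).
Proof.
move=> /is_osep_swap sep_a /is_osep_swap sep_b.
by rewrite sep_joinE; apply/is_osep_swap/is_osep_meet.
Qed.

Lemma sep_order_submod a b :
  sep_order (sep_meet a b) + sep_order (sep_join a b) <= sep_order a + sep_order b.
Proof.
rewrite /sep_order /= -cardsUI -[leqRHS]cardsUI.
by apply: leq_add; apply/subset_leq_card/subsetP => v; rewrite !inE; do 4!case: (_ \in _).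
Qed.

Lemma sep_le_meetl a b : sep_le (sep_meet a b) a.
Proof. by rewrite /sep_le subsetIl subsetUl. Qed.

Lemma sep_le_meetr a b : sep_le (sep_meet a b) b.
Proof. by rewrite /sep_le subsetIr subsetUr. Qed.

Lemma sep_le_joinl a b : sep_le a (sep_join a b).
Proof. by rewrite /sep_le subsetUl subsetIl. Qed.

Lemma sep_le_joinr a b : sep_le b (sep_join a b).
Proof. by rewrite /sep_le subsetUr subsetIr. Qed.

Lemma sep_meet_glb a b c : sep_le c a -> sep_le c b -> sep_le c (sep_meet a b).
Proof. by case/andP => ca1 ac2 /andP[cb1 bc2]; rewrite /sep_le subsetI ca1 cb1 subUset ac2. Qed.

Lemma sep_join_lub a b c : sep_le a c -> sep_le b c -> sep_le (sep_join a b) c.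
Proof. by case/andP => ac1 ca2 /andP[bc1 cb2]; rewrite /sep_le subUset ac1 bc1 subsetI ca2. Qed.

Lemma sep_meet_idPr a m : sep_le m a -> sep_meet a m = m.
Proof. by case: m => m1 m2 /andP[/setIidPr ma1 /setUidPr am2]; rewrite /sep_meet ma1 am2. Qed.

Lemma sep_join_idPr a m : sep_le a m -> sep_join a m = m.
Proof. by case: m => m1 m2 /andP[/setUidPr am1 /setIidPr ma2]; rewrite /sep_join am1 ma2. Qed.

Definition sep_bot : osep V := (set0, setT).
Definition sep_top : osep V := (setT, set0).

Lemma sep_swap_bot : sep_bot^* = sep_top.
Proof. by []. Qed.

Lemma in_vSk_bot : 0 < k -> inSk sep_bot.
Proof.
move=> k_gt0; rewrite in_vSkE /sep_order /= set0I cards0 k_gt0 andbT.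
by apply/is_osepP; split=> [|x y]; rewrite ?set0U // !inE.
Qed.

Lemma in_vSk_top : 0 < k -> inSk sep_top.
Proof. by move/in_vSk_bot/in_vSk_swap. Qed.

Lemma sep_le_bot z : sep_le z sep_bot -> z = sep_bot.
Proof.
case: z => z1 z2; rewrite /sep_le /= subset0 subTset => /andP[z1_0 z2_T].
by rewrite /sep_bot (eqP z1_0) (eqP z2_T).
Qed.

Lemma sep_top_le z : sep_le sep_top z -> z = sep_top.
Proof. by rewrite -sep_le_swapE => /sep_le_bot/(canRL sep_swapK). Qed.

(** * Linked chains and uncrossing *)

(* Linked chains from [sep_bot] to [sep_top] are the path-decompositions of
   width < k - 1, with bags [s.1 :&: s.2]. *)
Definition sep_link : rel (osep V) := fun s t =>
  [&& inSk s, inSk t, sep_le s t & (s.1 == t.1) || (s.2 == t.2)].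

Definition sep_linked := connect sep_link.

Lemma sep_linked_le s t : sep_linked s t -> sep_le s t.
Proof.
elim/connect_ind: s t / => [s|s t u /and4P[_ _ le_st _] _]; first exact: sep_le_refl.
exact: sep_le_trans.
Qed.

Lemma sep_linked_inSk s t : sep_linked s t -> inSk s -> inSk t.
Proof. by elim/connect_ind: s t / => // s t u /and4P[_ Skt _ _] _ IH _; apply: IH. Qed.

Lemma sep_link_swap s t : sep_link s t -> sep_link t^* s^*.
Proof.
case/and4P=> Sks Skt le_st side.
by rewrite /sep_link !in_vSk_swap ?sep_le_swap //= eq_sym orbC eq_sym.
Qed.

Lemma sep_linked_swap s t : sep_linked s t -> sep_linked t^* s^*.
Proof.
elim/connect_ind: s t / => [s|s t u /sep_link_swap st _ IH]; first exact: connect0.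
exact: connect_trans IH (connect1 st).
Qed.

Lemma sep_linked_meet m a b :
  (forall p, sep_linked a p -> sep_linked p b -> inSk (sep_meet p m)) ->
  sep_linked a b -> sep_linked (sep_meet a m) (sep_meet b m).
Proof.
move=> Sk_meet ab; elim/connect_ind: a b / ab Sk_meet => [a _|a b c ab bc IH Sk_meet].
  exact: connect0.
have Sk_a : inSk (sep_meet a m) by apply: Sk_meet (connect0 _ _) (connect_trans (connect1 ab) bc).
have Sk_b : inSk (sep_meet b m) by apply: Sk_meet (connect1 ab) bc.
apply: connect_trans (connect1 _) (IH _).
  case/and4P: ab => _ _ /andP[ab1 ba2] side.
  rewrite /sep_link Sk_a Sk_b /sep_le setSI ?setSU //=.
  by case/orP: side => /eqP->; rewrite eqxx ?orbT.
by move=> p bp pc; apply: Sk_meet (connect_trans (connect1 ab) bp) pc.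
Qed.

Lemma sep_linked_join m a b :
  (forall p, sep_linked a p -> sep_linked p b -> inSk (sep_join p m)) ->
  sep_linked a b -> sep_linked (sep_join a m) (sep_join b m).
Proof.
move=> Sk_join /sep_linked_swap ab; rewrite !sep_joinE.
apply: sep_linked_swap; apply: sep_linked_meet ab => p bp pa.
apply: (@in_vSk_swap (sep_join p^* m)); apply: Sk_join.
  by rewrite -[a]sep_swapK; exact: sep_linked_swap.
by rewrite -[b]sep_swapK; exact: sep_linked_swap.
Qed.

Lemma sep_order_meet_le p m :
  sep_order m <= sep_order (sep_join p m) -> sep_order (sep_meet p m) <= sep_order p.
Proof. by have := sep_order_submod p m; lia. Qed.

Lemma sep_order_join_le p m :
  sep_order m <= sep_order (sep_meet p m) -> sep_order (sep_join p m) <= sep_order p.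
Proof. by have := sep_order_submod p m; lia. Qed.

(* Uncrossing with a separation [m] of minimum order between [b1] and [a2]. *)
Lemma sep_linked_exchange a1 a2 b1 b2 :
  inSk a1 -> sep_linked a1 a2 -> inSk b1 -> sep_linked b1 b2 -> sep_le b1 a2 ->
  exists m, [/\ inSk (sep_meet a1 m), sep_linked (sep_meet a1 m) m
              & sep_linked m (sep_join b2 m)].
Proof.
move=> Sk_a1 a1a2 Sk_b1 b1b2 b1_a2.
have Sk_a2 := sep_linked_inSk a1a2 Sk_a1.
pose between x := [&& is_osep e x, sep_le b1 x & sep_le x a2].
have between_a2 : between a2 by rewrite /between b1_a2 sep_le_refl; case/andP: Sk_a2 => ->.
have [m /and3P[sep_m b1_m m_a2] m_min] := arg_minnP sep_order between_a2.
exists m; have Sk_meet p : sep_linked a1 p -> sep_linked p a2 -> inSk (sep_meet p m).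
  move=> a1p pa2; case/andP: (sep_linked_inSk a1p Sk_a1) => sep_p order_p.
  rewrite in_vSkE is_osep_meet //=; apply: leq_ltn_trans order_p.
  apply/sep_order_meet_le/m_min.
  by rewrite /between is_osep_join // (sep_le_trans b1_m (sep_le_joinr _ _))
    (sep_join_lub (sep_linked_le pa2) m_a2).
have Sk_join p : sep_linked b1 p -> sep_linked p b2 -> inSk (sep_join p m).
  move=> b1p pb2; case/andP: (sep_linked_inSk b1p Sk_b1) => sep_p order_p.
  rewrite in_vSkE is_osep_join //=; apply: leq_ltn_trans order_p.
  apply/sep_order_join_le/m_min.
  by rewrite /between is_osep_meet // (sep_le_trans (sep_le_meetr _ _) m_a2)
    (sep_meet_glb (sep_linked_le b1p) b1_m).
split; first exact: Sk_meet (connect0 _ _) a1a2.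
  by rewrite -{2}(sep_meet_idPr m_a2); exact: sep_linked_meet.
by rewrite -{1}(sep_join_idPr b1_m); exact: sep_linked_join.
Qed.

Lemma in_vSk_setT (B : {set V}) : #|B| < k -> inSk (setT, B).
Proof.
move=> small_B; rewrite in_vSkE /sep_order /= setTI small_B andbT.
by apply/is_osepP; split=> [|x y]; rewrite ?setTU // !inE.
Qed.

Lemma sep_link_top w : 0 < k -> inSk w -> w.1 = setT -> sep_link w sep_top.
Proof.
move=> k_gt0 Sk_w w1T; rewrite /sep_link Sk_w in_vSk_top //.
by rewrite /sep_le w1T subsetT sub0set eqxx.
Qed.

(* A closed orientation containing [x] contains [y]. *)
Definition sep_forces x y : bool :=
  [&& inSk x, inSk y & [exists z, exists w,
    [&& inSk z, sep_le z x, sep_le y w & sep_linked z w]]].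

Lemma sep_forcesP x y :
  reflect [/\ inSk x, inSk y &
           exists z w, [/\ inSk z, sep_le z x, sep_le y w & sep_linked z w]]
          (sep_forces x y).
Proof.
apply: (iffP and3P) => [[Skx Sky /existsP[z /existsP[w /and4P[]]]] | [Skx Sky [z [w []]]]].
  by split=> //; exists z, w.
by move=> *; split=> //; apply/existsP; exists z; apply/existsP; exists w; apply/and4P.
Qed.

Lemma sep_forces_inSk x y : sep_forces x y -> inSk x /\ inSk y.
Proof. by case/and3P. Qed.

Lemma sep_forces_le x y : inSk x -> inSk y -> sep_le y x -> sep_forces x y.
Proof.
move=> Skx Sky yx; apply/sep_forcesP; split=> //.
by exists y, y; rewrite sep_le_refl; split=> //; exact: connect0.
Qed.

Lemma sep_forces_link x y : sep_link x y -> sep_forces x y.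
Proof.
move=> xy; case/and4P: (xy) => Skx Sky _ _; apply/sep_forcesP; split=> //.
by exists x, y; rewrite !sep_le_refl; split=> //; exact: connect1.
Qed.

Lemma sep_forces_trans y x t : sep_forces x y -> sep_forces y t -> sep_forces x t.
Proof.
case/sep_forcesP=> Skx _ [z1 [w1 [Sk_z1 z1x yw1 z1w1]]].
case/sep_forcesP=> _ Skt [z2 [w2 [Sk_z2 z2y tw2 z2w2]]].
have [m [Sk_meet z1m mw2]] := sep_linked_exchange Sk_z1 z1w1 Sk_z2 z2w2 (sep_le_trans z2y yw1).
apply/sep_forcesP; split=> //; exists (sep_meet z1 m), (sep_join w2 m); split=> //.
- exact: sep_le_trans (sep_le_meetl _ _) z1x.
- exact: sep_le_trans tw2 (sep_le_joinl _ _).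
- exact: connect_trans z1m mw2.
Qed.

Lemma sep_forces_swap x y : sep_forces x y -> sep_forces y^* x^*.
Proof.
case/sep_forcesP=> Skx Sky [z [w [Skz zx yw zw]]].
apply/sep_forcesP; split; try exact: in_vSk_swap.
exists w^*, z^*; split; try exact: sep_le_swap; last exact: sep_linked_swap.
by apply: in_vSk_swap; exact: sep_linked_inSk zw Skz.
Qed.

Lemma sep_forces_bot_top : sep_forces sep_bot sep_top -> sep_linked sep_bot sep_top.
Proof. by case/sep_forcesP=> _ _ [z [w [_ /sep_le_bot-> /sep_top_le-> //]]]. Qed.

Lemma sep_forces_top x : 0 < k -> inSk x -> #|x.2| < k -> sep_forces x sep_top.
Proof.
move=> k_gt0 Skx small_x2; have SkT := in_vSk_setT small_x2.
apply: (@sep_forces_trans (setT, x.2)); apply: sep_forces_link; last exact: sep_link_top.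
by rewrite /sep_link Skx SkT /sep_le subsetT subxx eqxx orbT.
Qed.

(** * Closed orientations *)

Definition closed_orientation (O : {set osep V}) : bool :=
  [&& sep_bot \in O, [forall x in O, inSk x],
      [forall x in O, forall y, sep_forces x y ==> (y \in O)]
    & [forall x in O, x^* \notin O]].

Lemma closed_orientationP (O : {set osep V}) :
  reflect [/\ sep_bot \in O, forall x, x \in O -> inSk x,
              forall x y, x \in O -> sep_forces x y -> y \in O
            & forall x, x \in O -> x^* \notin O]
          (closed_orientation O).
Proof.
apply: (iffP and4P) => [[bot_O /forall_inP Sk_O /forall_inP forced_O /forall_inP swap_O]
                       | [bot_O Sk_O forced_O swap_O]].
  by split=> // x y /forced_O/forallP/(_ y)/implyP.
split=> //; [exact/forall_inP | | exact/forall_inP].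
by apply/forall_inP => x xO; apply/forallP => y; apply/implyP; exact: forced_O.
Qed.

Lemma closed_orientation_forced_by_bot :
  0 < k -> ~~ sep_linked sep_bot sep_top -> closed_orientation [set y | sep_forces sep_bot y].
Proof.
move=> k_gt0 not_bot_top; apply/closed_orientationP; split.
- by rewrite inE sep_forces_le ?in_vSk_bot ?sep_le_refl.
- by move=> x; rewrite inE => /sep_forces_inSk[].
- by move=> x y; rewrite !inE; exact: sep_forces_trans.
move=> x; rewrite !inE => bot_x; apply: contra not_bot_top => /sep_forces_swap.
by rewrite sep_swapK sep_swap_bot => /(sep_forces_trans bot_x)/sep_forces_bot_top.
Qed.

Definition sep_rank s := #|s.1| + #|~: s.2|.

Lemma sep_rank_lt z x : sep_le z x -> z != x -> sep_rank z < sep_rank x.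
Proof.
case: z x => [z1 z2] [x1 x2] /andP[/= zx1 xz2] ne_zx.
have zx2 : ~: z2 \subset ~: x2 by rewrite setCS.
rewrite /sep_rank ltn_neqAle leq_add ?subset_leq_card // andbT /=.
apply: contra ne_zx => /eqP eq_rank.
have [le_z1 le_z2] := (subset_leq_card zx1, subset_leq_card zx2).
have /eqP-> : z1 == x1 by rewrite eqEcard zx1; lia.
by have /eqP/setC_inj-> : ~: z2 == ~: x2 by rewrite eqEcard zx2; lia.
Qed.

Section Extension.
Variables (O : {set osep V}) (x : osep V).
Hypotheses (O_closed : closed_orientation O) (Skx : inSk x).
Hypothesis swap_xNO : x^* \notin O.
Hypothesis below_x_oriented :
  forall z, inSk z -> sep_le z x -> z != x -> (z \in O) || (z^* \in O).
Hypothesis not_x_top : ~~ sep_linked x sep_top.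

Lemma minimal_unoriented_not_forces_swap : 0 < k -> ~~ sep_forces x x^*.
Proof.
move=> k_gt0; have [_ _ forced_O _] := closed_orientationP _ O_closed.
apply/negP => /sep_forcesP[_ _ [z [w [Skz zx xw zw]]]].
have [eq_zx | ne_zx] := eqVneq z x.
  (* [w] lies above both [x] and [x^*], so its first side is everything *)
  move: zw; rewrite eq_zx => {}zw; apply: (negP not_x_top).
  have w1T : w.1 = setT.
    apply/eqP; rewrite eqEsubset subsetT -(proj1 (is_osepP _ (proj1 (andP Skx)))) subUset.
    by case/andP: (sep_linked_le zw) => -> _; case/andP: xw => ->.
  exact: connect_trans zw (connect1 (sep_link_top k_gt0 (sep_linked_inSk zw Skx) w1T)).
case/orP: (below_x_oriented Skz zx ne_zx) => [zO | swap_zO]; apply: (negP swap_xNO).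
  apply: (forced_O _ _ zO); apply/sep_forcesP; split=> //; first exact: in_vSk_swap.
  by exists z, w; rewrite sep_le_refl.
by apply: (forced_O _ _ swap_zO); rewrite sep_forces_le ?in_vSk_swap // sep_le_swapE.
Qed.

Lemma closed_orientation_extend :
  0 < k -> closed_orientation (O :|: [set t | sep_forces x t]).
Proof.
move=> k_gt0; have [bot_O Sk_O forced_O swap_O] := closed_orientationP _ O_closed.
have not_xx := minimal_unoriented_not_forces_swap k_gt0.
apply/closed_orientationP; split.
- by rewrite inE bot_O.
- by move=> y; rewrite !inE => /orP[/Sk_O // | /sep_forces_inSk[]].
- move=> a b; rewrite !inE => /orP[aO /(forced_O _ _ aO)-> // | xa ab].
  by rewrite (sep_forces_trans xa ab) orbT.
move=> y; rewrite !inE negb_or => /orP[yO | xy]; apply/andP; split.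
- exact: swap_O.
- apply: contra swap_xNO => /sep_forces_swap; rewrite sep_swapK; exact: forced_O.
- apply: contra swap_xNO => swap_yO; apply: (forced_O _ _ swap_yO).
  exact: sep_forces_swap.
- apply: contra not_xx => /sep_forces_swap; rewrite sep_swapK.
  exact: sep_forces_trans.
Qed.

End Extension.

Lemma maximal_closed_orientation_unoriented (O : {set osep V}) y :
  0 < k -> closed_orientation O ->
  (forall O', closed_orientation O' -> #|O'| <= #|O|) ->
  inSk y -> y \notin O -> y^* \notin O ->
  exists x, [/\ inSk x, sep_le x y & sep_linked x sep_top].
Proof.
move=> k_gt0 O_closed O_max Sky yNO swap_yNO.
pose unoriented_below_y z := [&& inSk z, z \notin O, z^* \notin O & sep_le z y].
have y_unoriented : unoriented_below_y y.
  by rewrite /unoriented_below_y Sky yNO swap_yNO sep_le_refl.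
have [x /and4P[Skx xNO swap_xNO xy] x_min] := arg_minnP sep_rank y_unoriented.
exists x; split=> //; apply/negPn/negP => not_x_top.
have below_x z : inSk z -> sep_le z x -> z != x -> (z \in O) || (z^* \in O).
  move=> Skz zx ne_zx; apply/negPn/negP; rewrite negb_or => /andP[zNO swap_zNO].
  have /x_min : unoriented_below_y z.
    by rewrite /unoriented_below_y Skz zNO swap_zNO (sep_le_trans zx xy).
  by rewrite leqNgt sep_rank_lt.
have := O_max _ (closed_orientation_extend O_closed Skx swap_xNO below_x not_x_top k_gt0).
apply/negP; rewrite -ltnNge; apply/proper_card/properP; split; first exact: subsetUl.
by exists x; rewrite // !inE sep_forces_le ?sep_le_refl ?orbT.
Qed.

Lemma exists_total_closed_orientation :
  0 < k -> ~~ sep_linked sep_bot sep_top ->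
  exists O, closed_orientation O /\ forall y, inSk y -> (y \in O) || (y^* \in O).
Proof.
move=> k_gt0 not_bot_top.
have [O O_closed O_max] :=
  arg_maxnP (fun O : {set osep V} => #|O|) (closed_orientation_forced_by_bot k_gt0 not_bot_top).
exists O; split=> // y Sky; apply/negPn/negP; rewrite negb_or => /andP[yNO swap_yNO].
have [x1 [Sk_x1 x1y x1_top]] :=
  maximal_closed_orientation_unoriented k_gt0 O_closed O_max Sky yNO swap_yNO.
have swap2_yNO : y^*^* \notin O by rewrite sep_swapK.
have [x2 [Sk_x2 x2y x2_top]] := maximal_closed_orientation_unoriented k_gt0 O_closed O_max
  (in_vSk_swap Sky) swap_yNO swap2_yNO.
(* [x1 <= y <= x2^*], and the chains [x1 -> top] and [bot -> x2^*] compose *)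
apply: (negP not_bot_top); apply/sep_forces_bot_top/(@sep_forces_trans x2^*).
  apply/sep_forcesP; split; rewrite ?in_vSk_bot ?in_vSk_swap //.
  exists sep_bot, x2^*; rewrite ?sep_le_refl ?in_vSk_bot //; split=> //.
  by have := sep_linked_swap x2_top; rewrite -sep_swap_bot sep_swapK.
apply/sep_forcesP; split; rewrite ?in_vSk_top ?in_vSk_swap //.
exists x1, sep_top; rewrite sep_le_refl; split=> //.
by apply: sep_le_trans x1y _; rewrite -sep_le_swapE sep_swapK.
Qed.

(** * Tangles and blockages *)

Lemma in_vSk_corner r s :
  inSk r -> inSk s -> sep_le r s^* -> #|s.2 :&: r.2| < k -> inSk (s.2, r.2).
Proof.
case/andP=> sep_r _ /andP[sep_s _] /andP[/= r1s2 s1r2] small; rewrite in_vSkE small andbT.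
have [cover_s sep_s'] := is_osepP _ sep_s.
apply/is_osepP; split=> /=.
  by apply/eqP; rewrite eqEsubset subsetT -cover_s setUC setUS.
move=> x y; rewrite !inE => /andP[xr2 xs2] /andP[ys2 yr2].
have ys1 : y \in s.1 by move: (sep_cover y sep_s); rewrite (negbTE ys2) orbF.
have xs1 : x \notin s.1 by apply: contra xr2; exact: (subsetP s1r2).
by rewrite e_sym; apply: sep_s'; rewrite inE ?ys1 ?xs2 ?ys2 ?xs1.
Qed.

(* Through the corner [(s.2, r.2)], which is linked to both [r] and [s^*]. *)
Lemma sep_forces_corner r s :
  inSk r -> inSk s -> sep_le r s^* -> #|s.2 :&: r.2| < k -> sep_forces r s^*.
Proof.
move=> Skr Sks rs small; have Sk_corner := in_vSk_corner Skr Sks rs small.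
case/andP: rs => /= r1s2 s1r2.
apply: (@sep_forces_trans (s.2, r.2)); apply: sep_forces_link.
  by rewrite /sep_link Skr Sk_corner /sep_le r1s2 subxx eqxx orbT.
by rewrite /sep_link Sk_corner in_vSk_swap // /sep_le subxx s1r2 eqxx.
Qed.

Lemma closed_orientation_top (O : {set osep V}) :
  closed_orientation O -> sep_top \notin O.
Proof. by case/closed_orientationP=> bot_O _ _ /(_ _ bot_O). Qed.

Lemma tangle_of_closed_orientation (O : {set osep V}) :
  0 < k -> closed_orientation O -> (forall y, inSk y -> (y \in O) || (y^* \in O)) ->
  is_tangle e k (F2 e k) O.
Proof.
move=> k_gt0 O_closed O_total; have topNO := closed_orientation_top O_closed.
have [bot_O Sk_O forced_O swap_O] := closed_orientationP _ O_closed.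
split.
- do 2!split=> //; move=> s _ _; apply/negP => /andP[/swap_O/negP]; exact.
- case=> r [s [/andP[Skr Sks] _ rs swap_rO sO]].
  by move: (swap_O _ swap_rO); rewrite sep_swapK (forced_O _ _ sO (sep_forces_le Sks Skr rs)).
move=> sigma sigmaO [Sk_sigma [[_ star] [r [s [def_sigma small]]]]].
have rO : r \in O by apply: (subsetP sigmaO); rewrite def_sigma !inE eqxx.
have sO : s \in O by apply: (subsetP sigmaO); rewrite def_sigma !inE eqxx orbT.
have [Skr Sks] := (Sk_O _ rO, Sk_O _ sO).
have [eq_rs | ne_rs] := eqVneq r s.
  move: small; rewrite -eq_rs setIid => /(sep_forces_top k_gt0 Skr) /(forced_O _ _ rO).
  by rewrite (negbTE topNO).
have rs : sep_le r s^* by apply: star; rewrite ?def_sigma ?inE ?eqxx ?orbT.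
move: (swap_O _ sO); rewrite (forced_O _ _ rO (sep_forces_corner Skr Sks rs _)) //.
by rewrite setIC.
Qed.

(* The largest separation whose first side is [A]. *)
Definition boundary_sep (A : {set V}) : osep V := (A, ~: A :|: boundary e A).

Lemma boundary_sep_meet A : A :&: (boundary_sep A).2 = boundary e A.
Proof. by apply/setP => x; rewrite !inE; case: (x \in A). Qed.

Lemma boundary_set0 : boundary e set0 = set0.
Proof. by apply/setP => x; rewrite !inE. Qed.

Lemma boundary_sub_meet (A C : {set V}) : is_osep e (A, C) -> boundary e A \subset A :&: C.
Proof.
move=> sep_AC; have [_ sep'] := is_osepP _ sep_AC.
apply/subsetP => x; rewrite !inE => /andP[xA /existsP[y /andP[exy yNA]]].
rewrite xA; apply/negPn/negP => xNC.
have yC : y \in C by move: (sep_cover y sep_AC); rewrite (negbTE yNA).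
by move: exy; apply/negP/sep'; rewrite inE ?xA ?yC ?xNC ?yNA.
Qed.

Lemma in_vSk_boundary_sep A : #|boundary e A| < k -> inSk (boundary_sep A).
Proof.
move=> small; rewrite in_vSkE /sep_order boundary_sep_meet small andbT.
apply/is_osepP; split=> /=; first by rewrite setUA setUCr setTU.
move=> x y /setDP[xA xNY] /setDP[_ yNA]; apply: contra xNY => exy.
by rewrite !inE xA /=; apply/existsP; exists y; rewrite exy yNA.
Qed.

Lemma sep_le_boundary_sep (A C : {set V}) : is_osep e (A, C) -> sep_le (A, C) (boundary_sep A).
Proof.
move=> sep_AC; rewrite /sep_le subxx subUset.
rewrite (subset_trans (boundary_sub_meet sep_AC)) ?subsetIr // andbT.
by apply/subsetP => x; rewrite inE => xNA; move: (sep_cover x sep_AC); rewrite (negbTE xNA).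
Qed.

Lemma boundary_sep_mono (X' X : {set V}) :
  X' \subset X -> sep_le (boundary_sep X') (boundary_sep X).
Proof.
move=> sub; rewrite /sep_le sub; apply/subsetP => x; rewrite !inE.
case X'x : (x \in X') => //=; rewrite (subsetP sub _ X'x) /=.
case/existsP=> y /andP[exy yNX]; apply/existsP; exists y.
by rewrite exy; apply: contra yNX; exact: (subsetP sub).
Qed.

Lemma closed_orientation_boundary_sep (O : {set osep V}) A C :
  closed_orientation O -> inSk (A, C) -> ((A, C) \in O) = (boundary_sep A \in O).
Proof.
case/closed_orientationP=> _ Sk_O forced_O _ Sk_AC.
have AC_le := sep_le_boundary_sep (proj1 (andP Sk_AC)).
have Sk_A : inSk (boundary_sep A).
  apply: in_vSk_boundary_sep; apply: leq_ltn_trans (proj2 (andP Sk_AC)).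
  exact/subset_leq_card/boundary_sub_meet/(proj1 (andP Sk_AC)).
apply/idP/idP => [ACO | AO]; apply: forced_O; [exact: ACO | | exact: AO | ].
  by apply: sep_forces_link; rewrite /sep_link Sk_AC Sk_A AC_le eqxx.
exact: sep_forces_le.
Qed.

Lemma blockage_of_closed_orientation (O : {set osep V}) :
  closed_orientation O -> (forall y, inSk y -> (y \in O) || (y^* \in O)) ->
  is_blockage e k [set A | boundary_sep A \in O].
Proof.
move=> O_closed O_total; have [_ Sk_O forced_O swap_O] := closed_orientationP _ O_closed.
split.
- by move=> X; rewrite inE => /Sk_O; rewrite in_vSkE /sep_order boundary_sep_meet => /andP[].
- move=> X X'; rewrite !inE => XO sub small; apply: (forced_O _ _ XO).
  apply: sep_forces_le; [exact: Sk_O XO | exact: in_vSk_boundary_sep | exact: boundary_sep_mono].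
case=> A C Sk_AC; have Sk_CA := in_vSk_swap Sk_AC.
rewrite !inE -(closed_orientation_boundary_sep O_closed Sk_AC).
rewrite -(closed_orientation_boundary_sep O_closed Sk_CA).
move: (O_total _ Sk_AC) (swap_O (A, C)); rewrite /sep_swap /=.
by case: ((A, C) \in O); case: ((C, A) \in O) => // _; apply.
Qed.

(** * Trees and path-decompositions *)

(* Orient each tree edge [xy] towards [y] when [alpha x y] lies in the tangle:
   no node is a sink, so there is a walk that never turns back. *)
Lemma tangle_no_Sk_tree (O : {set osep V}) (N : finType) (f : rel N) alpha :
  is_tangle e k (F2 e k) O -> ~ Sk_tree_over e k (F2 e k) f alpha.
Proof.
case=> [[_ [O_total _]] _ no_F2_star].
case=> [[f_sym f_irr _ f_acyclic [x0 [y0 f_xy0]]] Sk_alpha alpha_swap alpha_F2].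
pose D x y := f x y && (alpha x y \in O).
have D_f : subrel D f by move=> x y /andP[].
have D_continue x y : D x y -> exists2 z, D y z & z != x.
  case/andP=> fxy xyO.
  have /subsetPn[a /imsetP[z]] : ~~ ([set alpha z y | z in [set z | f z y]] \subset O).
    by apply/negP => /no_F2_star; apply; exact: alpha_F2.
  rewrite inE => fzy -> zyNO.
  have yzO : alpha y z \in O.
    by rewrite (alpha_swap _ _ fzy); move: (O_total _ (Sk_alpha _ _ fzy)); rewrite (negbTE zyNO).
  by exists z; [rewrite /D f_sym fzy | apply: contraNneq zyNO => ->].
have no_D := acyclic_no_nonbacktracking_walk f_sym f_irr f_acyclic D_f D_continue.
case/orP: (O_total _ (Sk_alpha _ _ f_xy0)) => [xyO | yxO].
  by move: (no_D x0 y0); rewrite /D f_xy0 xyO.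
by move: (no_D y0 x0); rewrite /D f_sym f_xy0 (alpha_swap _ _ f_xy0) yxO.
Qed.

Lemma sep_linked_chain s t :
  sep_linked s t -> exists c : nat -> osep V, exists n,
    [/\ c 0 = s, c n = t & forall i, i < n -> sep_link (c i) (c i.+1)].
Proof.
case/connectP=> p p_link t_last; exists (fun i => nth s (s :: p) i), (size p).
split=> //; first by rewrite t_last -last_nth.
by move=> i; move/(pathP s): p_link; apply.
Qed.

Lemma F2_link r t : sep_link r t -> F2 e k [set r; t^*].
Proof.
case/and4P=> Skr Skt rt side; split; last split.
- by move=> u; rewrite !inE => /orP[] /eqP->; rewrite ?in_vSk_swap.
- split; first by apply/set0Pn; exists r; rewrite !inE eqxx.
  by move=> u v; rewrite !inE => /orP[] /eqP-> /orP[] /eqP->;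
    rewrite ?eqxx // => _; rewrite ?sep_swapK ?sep_le_swap.
exists r, t^*; split=> //=; case/orP: side => /eqP side; rewrite setIC.
  by rewrite -side; case/andP: Skr.
by rewrite side; case/andP: Skt.
Qed.

Lemma F2_top : 0 < k -> F2 e k [set sep_top; sep_top].
Proof.
move=> k_gt0; rewrite setUid; split; last split.
- by move=> u; rewrite inE => /eqP->; exact: in_vSk_top.
- split; first by apply/set0Pn; exists sep_top; rewrite inE.
  by move=> u v; rewrite !inE => /eqP-> /eqP->; rewrite eqxx.
by exists sep_top, sep_top; rewrite setUid /= setI0 cards0.
Qed.

Section LinkedChain.
Variables (c : nat -> osep V) (n : nat).
Hypotheses (c0 : c 0 = sep_bot) (cn : c n = sep_top).
Hypothesis c_link : forall i, i < n -> sep_link (c i) (c i.+1).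

(* The path [0 - 1 - ... - n.+1] whose edge [i - i.+1] is labelled [c i]. *)
Definition chain_alpha (i j : 'I_n.+2) : osep V := if i.+1 == j :> nat then c i else (c j)^*.

Definition chain_in (t : nat) := if t == 0 then sep_top else c t.-1.
Definition chain_out (t : nat) := if t == n.+1 then sep_top else (c t)^*.

Lemma chain_Sk i : 0 < k -> i <= n -> inSk (c i).
Proof. by case: i => [k_gt0 _ | i _ /c_link/and4P[]//]; rewrite c0 in_vSk_bot. Qed.

Lemma chain_star (t : 'I_n.+2) :
  [set chain_alpha x t | x in [set x | path_rel x t]] = [set chain_in t; chain_out t].
Proof.
have t_lt : t < n.+2 := ltn_ord t.
apply/setP => u; apply/imsetP/set2P => [[x] | [->|->]].
- rewrite inE /chain_alpha /chain_in /chain_out => /orP[] /eqP xt ->.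
    by left; rewrite -xt eqxx.
  by right; rewrite !ifN_eq //; move: (ltn_ord x); lia.
- case: (posnP t) => [t0 | t_gt0].
    exists (inord 1); first by rewrite inE /path_rel inordK // t0.
    by rewrite /chain_alpha /chain_in inordK // t0 /= c0.
  exists (inord t.-1); first by rewrite inE /path_rel inordK ?prednK ?eqxx //; lia.
  by rewrite /chain_alpha /chain_in inordK ?prednK ?eqxx ?gtn_eqF //; lia.
- case: (eqVneq (t : nat) n.+1) => [tn | ne_tn].
    exists (inord n); first by rewrite inE /path_rel inordK // tn eqxx.
    by rewrite /chain_alpha /chain_out inordK // tn !eqxx cn.
  exists (inord t.+1); first by rewrite inE /path_rel inordK ?eqxx ?orbT //; lia.
  by rewrite /chain_alpha /chain_out inordK ?ifN_eq //; lia.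
Qed.

Lemma chain_Sk_tree : 0 < k -> Sk_tree_over e k (F2 e k) (@path_rel n.+2) chain_alpha.
Proof.
move=> k_gt0; have Sk_c := chain_Sk k_gt0.
split.
- exact: path_rel_tree.
- move=> x y /orP[] /eqP xy; rewrite /chain_alpha.
    by rewrite xy eqxx; apply: Sk_c; have := ltn_ord y; lia.
  by rewrite ifN_eq; [apply/in_vSk_swap/Sk_c; have := ltn_ord x | ]; lia.
- move=> x y /orP[] /eqP xy; rewrite /chain_alpha.
    by rewrite xy eqxx ifN_eq //; lia.
  by rewrite xy eqxx ifN_eq ?sep_swapK //; lia.
move=> t; rewrite chain_star /chain_in /chain_out.
case: (posnP t) => [-> | t_gt0]; first by rewrite /= c0 sep_swap_bot; exact: F2_top.
case: (eqVneq (t : nat) n.+1) => [-> | ne_tn]; first by rewrite /= cn; exact: F2_top.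
apply: F2_link.
by move: (@c_link t.-1); rewrite prednK //; apply; have := ltn_ord t; lia.
Qed.

Lemma chain_le i j : i <= j -> j <= n -> sep_le (c i) (c j).
Proof.
move=> ij jn; have i_n := leq_trans ij jn.
apply: (homo_leq_in (D := [pred l | l <= n]) (r := fun a b => sep_le a b)) ij;
  rewrite ?inE ?i_n //.
- exact: sep_le_refl.
- by move=> b a d; exact: sep_le_trans.
- by move=> a b _ bn x /andP[_ xb]; rewrite inE ltnW // (leq_trans xb).
- by move=> l _ ln; case/and4P: (c_link ln).
Qed.

Definition chain_bag i := (c i).1 :&: (c i).2.

Lemma chain_entry v : exists2 j, j < n & (v \notin (c j).1) && (v \in (c j.+1).1).
Proof.
by apply: (@nat_transition (fun j => v \in (c j).1)); rewrite ?c0 ?cn inE.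
Qed.

Lemma chain_entry_bag v j : j < n -> v \notin (c j).1 -> v \in (c j.+1).1 ->
  (c j).2 = (c j.+1).2 /\ v \in chain_bag j.+1.
Proof.
move=> jn vNj vj1; case/and4P: (c_link jn) => /andP[sep_j _] _ _ /orP[/eqP side | /eqP side].
  by rewrite side vj1 in vNj.
split=> //; rewrite !inE vj1 -side /=.
by move: (sep_cover v sep_j); rewrite (negbTE vNj).
Qed.

Lemma chain_edge_bag x y : e x y ->
  exists2 j, j <= n & (x \in chain_bag j) && (y \in chain_bag j).
Proof.
move=> exy; have [jx jxn /andP[xN xj]] := chain_entry x.
have [jy jyn /andP[yN yj]] := chain_entry y.
wlog le_xy : x y jx jy exy jxn xN xj jyn yN yj / jx <= jy.
  move=> H; case: (leqP jx jy) => [|/ltnW] le; first exact: H exy jxn xN xj jyn yN yj le.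
  have eyx : e y x by rewrite e_sym.
  by have [j jn] := H _ _ _ _ eyx jyn yN yj jxn xN xj le; exists j; rewrite // andbC.
have [side y_bag] := chain_entry_bag jyn yN yj.
exists jy.+1 => //; rewrite y_bag andbT inE.
have -> : x \in (c jy.+1).1.
  by case/andP: (chain_le (le_xy : jx.+1 <= jy.+1) jyn) => /subsetP sub _; exact: sub xj.
have [/andP[sep_jy _] _ _ _] := and4P (c_link jyn).
rewrite -side (sep_edge_side sep_jy exy) //.
by move: y_bag; rewrite !inE -side yN => /andP[_ ->].
Qed.

Lemma chain_path_decomp : is_path_decomp e (mkseq chain_bag n.+1).
Proof.
have nth_bag i : i <= n -> nth set0 (mkseq chain_bag n.+1) i = chain_bag i.
  by move=> i_n; rewrite nth_mkseq.
have bag_in i : i <= n -> chain_bag i \in mkseq chain_bag n.+1.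
  by move=> i_n; rewrite -nth_bag // mem_nth // size_mkseq.
split; first by rewrite size_mkseq.
- move=> v; have [j jn /andP[vN vj]] := chain_entry v.
  by exists (chain_bag j.+1); [exact: bag_in | case: (chain_entry_bag jn vN vj)].
- move=> x y /chain_edge_bag[j jn xy]; exists (chain_bag j) => //; exact: bag_in.
move=> i j l ij jl; rewrite size_mkseq ltnS => ln; have jn := leq_trans jl ln.
rewrite !nth_bag ?(leq_trans ij) //; apply/subsetP => v; rewrite !inE.
case/andP: (chain_le ij jn) => /subsetP ij1 _; case/andP: (chain_le jl ln) => _ /subsetP lj2.
by case/andP=> /andP[/ij1 -> _] /andP[_ /lj2 ->].
Qed.

Lemma chain_pd_width : 0 < #|V| -> pd_width (mkseq chain_bag n.+1) < k.-1.
Proof.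
case/card_gt0P=> v _; have [j jn /andP[vN vj]] := chain_entry v.
have [_ v_bag] := chain_entry_bag jn vN vj.
have bag_le i : i <= n -> #|chain_bag i| <= k.-1.
  case: i => [_ | i /c_link/and4P[_ /andP[_ small] _ _]].
    by rewrite /chain_bag c0 set0I cards0.
  by rewrite -ltnS (leq_trans small) // -add1n -leq_subLR subn1.
have width_le : \max_(W <- mkseq chain_bag n.+1) #|W| <= k.-1.
  by apply/bigmax_leqP_seq => W /mapP[i]; rewrite mem_iota add0n ltnS => /andP[_ /bag_le] + ->.
have width_gt0 : 0 < \max_(W <- mkseq chain_bag n.+1) #|W|.
  apply: leq_trans (leq_bigmax_seq (F := fun W : {set V} => #|W|) (P := xpredT)
    (chain_bag j.+1) _ _) => //; first by apply/card_gt0P; exists v.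
  by apply/mapP; exists j.+1; rewrite // mem_iota ltnS.
by rewrite /pd_width; case: (\max_(_ <- _) _) width_le width_gt0.
Qed.

End LinkedChain.

(* The first side of a linked chain stays in the blockage, but [sep_bot] and
   [sep_top] have first sides [set0] (in) and [setT] (out). *)
Lemma blockage_not_linked B :
  0 < k -> is_blockage e k B -> ~~ sep_linked sep_bot sep_top.
Proof.
move=> k_gt0 [_ B_down B_split].
have set0_B : set0 \in B.
  case/boolP: (setT \in B) => [TB | TNB]; last first.
    by move: (B_split _ (in_vSk_bot k_gt0)); rewrite /= (negbTE TNB) addbF.
  by apply: B_down TB (sub0set _) _; rewrite boundary_set0 cards0.
have setT_NB : setT \notin B by move: (B_split _ (in_vSk_bot k_gt0)); rewrite /= set0_B.
have keep_B s t : sep_linked s t -> s.1 \in B -> t.1 \in B.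
  elim/connect_ind: s t / => // s t u /and4P[Sks Skt _ side] _ IH sB.
  apply: IH; case/orP: side => [/eqP <- // | /eqP side].
  by move: (B_split _ Sks) (B_split _ Skt); rewrite side sB /= => /negbTE->; rewrite addbF.
by apply/negP => /keep_B/(_ set0_B); apply/negP.
Qed.

Lemma pd_width_narrow (P : seq {set V}) W : pd_width P < k.-1 -> W \in P -> #|W| < k.
Proof.
move=> narrow WP; have /= := leq_bigmax_seq (F := fun W : {set V} => #|W|) (P := xpredT) W WP isT.
by move: narrow; rewrite /pd_width; lia.
Qed.

Section NarrowPathDecomposition.
Variable P : seq {set V}.
Hypothesis P_pd : is_path_decomp e P.
Hypothesis P_narrow : forall W, W \in P -> #|W| < k.

Local Notation n := (size P).
Local Notation bag i := (nth set0 P i).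

Definition pd_prefix j := \bigcup_(i < n | i < j) bag i.
Definition pd_suffix j := \bigcup_(i < n | j <= i) bag i.

Lemma mem_pd_prefix v j :
  reflect (exists2 i, (i < j) && (i < n) & v \in bag i) (v \in pd_prefix j).
Proof.
apply: (iffP bigcupP) => [[i ij vi] | [i /andP[ij i_n] vi]].
  by exists i; rewrite ?ij ?ltn_ord.
by exists (Ordinal i_n).
Qed.

Lemma mem_pd_suffix v j :
  reflect (exists2 i, (j <= i) && (i < n) & v \in bag i) (v \in pd_suffix j).
Proof.
apply: (iffP bigcupP) => [[i ij vi] | [i /andP[ij i_n] vi]].
  by exists i; rewrite ?ij ?ltn_ord.
by exists (Ordinal i_n).
Qed.

Lemma pd_bag_of v : exists2 i, i < n & v \in bag i.
Proof.
case: P_pd => _ cover _ _; have [W /(nthP set0)[i i_n <-]] := cover v.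
by exists i.
Qed.

Lemma pd_sep_Sk j (X : {set V}) :
  j < n -> pd_prefix j \subset X -> X \subset pd_prefix j.+1 -> inSk (X, pd_suffix j).
Proof.
move=> j_n pre_X X_pre; case: P_pd => _ _ edge interp.
rewrite in_vSkE; apply/andP; split.
  apply/is_osepP; split=> /=.
    apply/setP => v; rewrite !inE; have [i i_n vi] := pd_bag_of v.
    case: (ltnP i j) => ij; last by apply/orP; right; apply/mem_pd_suffix; exists i; rewrite ?ij.
    by rewrite (subsetP pre_X) //; apply/mem_pd_prefix; exists i; rewrite ?ij.
  move=> x y /setDP[xX /mem_pd_suffix xNsuf] /setDP[/mem_pd_suffix ysuf yNX].
  apply/negP => /edge[W /(nthP set0)[i i_n <-] /andP[xi yi]].
  case: (ltnP i j) => ij.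
    by move: yNX; rewrite (subsetP pre_X) //; apply/mem_pd_prefix; exists i; rewrite ?ij.
  by apply: xNsuf; exists i; rewrite ?ij.
apply: leq_ltn_trans (P_narrow (mem_nth set0 j_n)).
apply/subset_leq_card/subsetP => v; rewrite inE.
case/andP=> /(subsetP X_pre)/mem_pd_prefix[i1 /andP[i1j _] v1].
case/mem_pd_suffix=> i2 /andP[ji2 i2_n] v2.
by apply: (subsetP (interp i1 j i2 _ ji2 i2_n)); rewrite // inE v1 v2.
Qed.

Lemma pd_prefix_sub j : pd_prefix j \subset pd_prefix j.+1.
Proof.
apply/subsetP => v /mem_pd_prefix[i /andP[ij i_n] vi].
by apply/mem_pd_prefix; exists i; rewrite // ltnS (ltnW ij).
Qed.

Lemma pd_suffix_sub j : pd_suffix j.+1 \subset pd_suffix j.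
Proof.
apply/subsetP => v /mem_pd_suffix[i /andP[ji i_n] vi].
by apply/mem_pd_suffix; exists i; rewrite // (ltnW ji).
Qed.

Lemma pd_prefix_end : pd_prefix n = setT.
Proof.
apply/setP => v; rewrite inE; have [i i_n vi] := pd_bag_of v.
by apply/mem_pd_prefix; exists i; rewrite ?i_n.
Qed.

Lemma pd_suffix_start : pd_suffix 0 = setT.
Proof.
apply/setP => v; rewrite inE; have [i i_n vi] := pd_bag_of v.
by apply/mem_pd_suffix; exists i; rewrite ?i_n.
Qed.

Lemma pd_prefix_start : pd_prefix 0 = set0.
Proof. by apply/setP => v; rewrite inE; apply/mem_pd_prefix => -[]. Qed.

Lemma pd_suffix_end : pd_suffix n = set0.
Proof. by apply/setP => v; rewrite inE; apply/mem_pd_suffix => -[i]; case: leqP. Qed.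

Lemma narrow_pd_linked : 0 < k -> sep_linked sep_bot sep_top.
Proof.
move=> k_gt0.
have Sk j : j <= n -> inSk (pd_prefix j, pd_suffix j).
  rewrite leq_eqVlt => /orP[/eqP-> | j_n]; last exact: pd_sep_Sk (subxx _) (pd_prefix_sub _).
  by rewrite pd_prefix_end pd_suffix_end; apply: in_vSk_setT; rewrite cards0.
suff /(_ n (leqnn n)) : forall j, j <= n -> sep_linked sep_bot (pd_prefix j, pd_suffix j).
  by rewrite pd_prefix_end pd_suffix_end.
elim=> [_ | j IH j_n]; first by rewrite pd_prefix_start pd_suffix_start; exact: connect0.
have mid := pd_sep_Sk j_n (pd_prefix_sub j) (subxx _).
apply: connect_trans (IH (ltnW j_n)) _.
apply: (@connect_trans _ _ (pd_prefix j.+1, pd_suffix j)); apply: connect1.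
  by rewrite /sep_link Sk ?(ltnW j_n) // mid /sep_le pd_prefix_sub subxx eqxx orbT.
by rewrite /sep_link mid Sk // /sep_le subxx pd_suffix_sub eqxx.
Qed.

End NarrowPathDecomposition.

End Separations.

Theorem theorem5p10 (V : finType) (e : rel V) (k : nat) :
  symmetric e -> irreflexive e -> 0 < #|V| -> 0 < k ->
  [<-> exists B : {set {set V}}, is_blockage e k B;
       exists O : {set osep V}, is_tangle e k (F2 e k) O;
       ~ has_Sk_tree_over e k (F2 e k);
       pathwidth_at_least e k.-1].
Proof.
move=> e_sym _ V_gt0 k_gt0.
pose unlinked := ~~ sep_linked e k (sep_bot V) (sep_top V).
have oriented : unlinked -> exists O, closed_orientation e k O /\
    forall y, in_vSk e k y -> (y \in O) || (sep_swap y \in O).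
  exact: exists_total_closed_orientation.
have linked_chain := @sep_linked_chain V e k (sep_bot V) (sep_top V).
tfae=> [[B blockage] | [O tangle] | no_tree | wide].
- have [O [O_closed O_total]] := oriented (blockage_not_linked k_gt0 blockage).
  by exists O; exact: tangle_of_closed_orientation.
- by case=> N [f [alpha tree]]; exact: tangle_no_Sk_tree tangle tree.
- move=> P P_pd; rewrite leqNgt; apply/negP => narrow; apply: no_tree.
  have := narrow_pd_linked P_pd (fun W => pd_width_narrow narrow) k_gt0.
  case/linked_chain=> c [n [c0 cn c_link]].
  by exists 'I_n.+2, (@path_rel n.+2), (@chain_alpha V c n); exact: chain_Sk_tree.
- have [|O [O_closed O_total]] := oriented.
    apply/negP => /linked_chain[c [n [c0 cn c_link]]].
    have := wide _ (chain_path_decomp e_sym c0 cn c_link).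
    by rewrite leqNgt (chain_pd_width c0 cn c_link V_gt0).
  by exists [set A | boundary_sep e A \in O]; exact: blockage_of_closed_orientation.
Qed.
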